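(* Let $G$ be a connected graph with a pendant vertex $u$, and let $v$ be the unique neighbour of $u$, assumed to be a cut-vertex of $G$. If $G-\{v,u\}$ has at least two connected components, then $u$ is not a basis forced vertex of $G$.
   Context: All graphs are finite and simple. A pendant is a vertex with exactly one neighbour; a cut-vertex is a vertex $v$ such that $G-v$ is disconnected. For vertices $x,y$ of a connected graph $G$, $d(x,y)$ is the length of a shortest $x$–$y$ path. A set $R\subseteq V(G)$ is a resolving set if for all distinct $x,y\in V(G)$ there is $r\in R$ with $d(r,x)\neq d(r,y)$. The metric dimension $\dim(G)$ is the minimum cardinality of a resolving set, and a resolving set of cardinality $\dim(G)$ is a metric basis. A vertex is a basis forced vertex if it belongs to every metric basis of $G$. *)

From mathcomp Require Import all_boot.
Set Implicit Arguments. Unset Strict Implicit. Unset Printing Implicit Defensive.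

Definition simple_graph (T : finType) (e : rel T) : Prop :=
  symmetric e /\ irreflexive e.

Definition connected_graph (T : finType) (e : rel T) : Prop :=
  forall x y : T, connect e x y.

Definition induced (T : finType) (e : rel T) (S : {set T}) : rel T :=
  fun a b => [&& e a b, a \in S & b \in S].

Definition at_least_two_components (T : finType) (e : rel T) (S : {set T}) : Prop :=
  exists x y, [/\ x \in S, y \in S & ~~ connect (induced e S) x y].

Definition cut_vertex (T : finType) (e : rel T) (v : T) : Prop :=
  at_least_two_components e (~: [set v]).

Definition walk (T : finType) (e : rel T) (x y : T) (n : nat) : bool :=
  [exists p : n.-tuple T, path e x p && (last x p == y)].

(* d(x,y): the least length of an x-y walk (= shortest path length);
   in a connected graph this is < #|T|. *)
Definition dist (T : finType) (e : rel T) (x y : T) : nat :=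
  \big[minn/#|T|]_(n < #|T| | walk e x y n) n.

Definition resolving (T : finType) (e : rel T) (R : {set T}) : Prop :=
  forall x y : T, x != y -> exists2 r, r \in R & dist e r x != dist e r y.

Definition metric_basis (T : finType) (e : rel T) (R : {set T}) : Prop :=
  resolving e R /\ forall S : {set T}, resolving e S -> #|R| <= #|S|.

Definition basis_forced (T : finType) (e : rel T) (u : T) : Prop :=
  forall B : {set T}, metric_basis e B -> u \in B.

(* Let B be a metric basis containing u and S := B \ u. As u is pendant,
   d(u,x) = d(v,x) + 1 for x <> u, and v lies on every path between two
   components of G - {u,v} (u and v counting as singleton components).
   We trade u for some w <> u such that every t <> u is seen through v by a
   landmark r of w + S, i.e. d(r,t) = d(r,v) + d(v,t).  The landmarks then
   determine d(v,-), hence d(u,-), away from u, so w + S resolves every pair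
   except possibly u and a twin of u: a vertex at distance 1 from v with the
   same distances to S as u.  Twins are unique, so it suffices that w be the
   twin whenever there is one.  If some component C of G - {u,v} misses S,
   the neighbour w of v in C is the twin; S sees C through v and w sees the
   rest.  Otherwise S sees everything through v, and w is the twin, or v. *)

From mathcomp Require Import all_boot order.
Set Implicit Arguments. Unset Strict Implicit. Unset Printing Implicit Defensive.

Section Walks.
Variables (T : finType) (e : rel T).

Lemma walkP x y n :
  reflect (exists2 p : seq T, size p = n & path e x p && (last x p == y))
          (walk e x y n).
Proof.
apply: (iffP existsP) => [[p pp] | [p sp pp]]; first by exists p; rewrite ?size_tuple.
have sp' : size p == n by rewrite sp.
by exists (Tuple sp').
Qed.

Lemma walk0 x : walk e x x 0.
Proof. by apply/walkP; exists [::]; rewrite /= ?eqxx. Qed.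

Lemma walk0_eq x y : walk e x y 0 -> x = y.
Proof. by case/walkP => -[|//] _ /eqP. Qed.

Lemma walkS x y n : walk e x y n.+1 = [exists z, e x z && walk e z y n].
Proof.
apply/walkP/existsP => [[[|z p] //= [sp] /andP[/andP[xz pp] pl]] | ].
  by exists z; rewrite xz; apply/walkP; exists p; rewrite ?pp.
by case=> z /andP[xz /walkP[p sp pp]]; exists (z :: p); rewrite /= ?sp ?xz.
Qed.

Lemma walk_cat x y z m n : walk e x y m -> walk e y z n -> walk e x z (m + n).
Proof.
move=> /walkP[p <- /andP[pp /eqP pl]] /walkP[q <- /andP[qp ql]]; apply/walkP.
by exists (p ++ q); rewrite ?size_cat // cat_path last_cat pl pp qp.
Qed.

Lemma walk_sym : symmetric e -> forall x y n, walk e x y n -> walk e y x n.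
Proof.
move=> esym x y n; elim: n x => [|n IHn] x; first by move/walk0_eq->; apply: walk0.
rewrite walkS => /existsP[z /andP[xz /IHn zy]]; rewrite -addn1; apply: walk_cat zy _.
by apply/walkP; exists [:: x]; rewrite //= esym xz eqxx.
Qed.

End Walks.

Section Distance.
Variables (T : finType) (e : rel T).
Local Notation d := (dist e).

Lemma dist_le x y n : walk e x y n -> d x y <= n.
Proof.
move=> xy; have [ltnT | leTn] := ltnP n #|T|.
  exact: (@Order.TotalTheory.bigmin_le_cond _ nat _ _ (Ordinal ltnT) _ val xy).
exact: leq_trans (@Order.TotalTheory.bigmin_le_id _ nat _ _ _ _ val) leTn.
Qed.

Lemma dist0 x : d x x = 0.
Proof. by apply/eqP; rewrite -leqn0 dist_le ?walk0. Qed.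

Lemma dist_path x p : path e x p -> d x (last x p) <= size p.
Proof. by move=> xp; apply: dist_le; apply/walkP; exists p; rewrite ?xp ?eqxx. Qed.

Lemma dist_path_mem x p z : path e x p -> z \in p -> d x z + d z (last x p) <= size p.
Proof.
move=> xp zp; case/splitPr: zp xp => p1 p2.
rewrite cat_path last_cat size_cat /= => /and3P[xp1 xz zp2].
rewrite -addSnnS -(size_rcons p1 z) leq_add ?dist_path //.
by rewrite -{1}(last_rcons x p1 z) dist_path // rcons_path xp1.
Qed.

Hypothesis conn : connected_graph e.

Lemma dist_walk x y : walk e x y (d x y).
Proof.
have [p xp ->] := connectP (conn x y); case: (shortenP xp) => q xq uq _.
have ltqT : size q < #|T| by rewrite -[_ < _]/(size (x :: q) <= _) -(card_uniqP uq) max_card.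
have wq : walk e x (last x q) (Ordinal ltqT) by apply/walkP; exists q; rewrite ?xq ?eqxx.
have [i wi min_i] := @Order.TotalTheory.eq_bigmin _ nat _ #|T| _
  (fun i : 'I_#|T| => walk e x (last x q) i) val wq (fun i _ => ltnW (ltn_ord i)).
by rewrite /dist min_i; apply: wi.
Qed.

Lemma dist_eq0 x y : d x y = 0 -> x = y.
Proof. by move=> dxy0; have := dist_walk x y; rewrite dxy0 => /walk0_eq. Qed.

Lemma dist_triangle x y z : d x z <= d x y + d y z.
Proof. by apply: dist_le; apply: walk_cat; apply: dist_walk. Qed.

Lemma dist_via_le r x y z : d r x = d r y + d y x -> d r x = d r z -> d y x <= d y z.
Proof. by move=> via same; rewrite -(leq_add2l (d r y)) -via same dist_triangle. Qed.

Hypothesis esym : symmetric e.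

Lemma dist_sym x y : d x y = d y x.
Proof. by apply/eqP; rewrite eqn_leq !dist_le // walk_sym // dist_walk. Qed.

Hypothesis eirr : irreflexive e.

Lemma dist_edge x y : e x y -> d x y = 1.
Proof.
move=> exy; apply/eqP; rewrite eqn_leq -[1]/(size [:: y]).
rewrite (dist_path (p := [:: y])) /=; last by rewrite exy.
by rewrite lt0n; apply/eqP => /dist_eq0 xy; rewrite xy eirr in exy.
Qed.

End Distance.

Lemma path_exit (T : finType) (e : rel T) (C : pred T) x p :
  path e x p -> x \in C -> last x p \notin C ->
  exists y z, [/\ y \in C, z \notin C, e y z & z \in p].
Proof.
elim: p x => [|z p IHp] x /=; first by move=> _ ->.
move=> /andP[xz zp] xC lastC; case: (boolP (z \in C)) => [zC | zNC].
  by have [y [t [yC tC yt tp]]] := IHp z zp zC lastC; exists y, t; rewrite inE tp orbT.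
by exists x, z; rewrite inE eqxx.
Qed.

Section InducedSubgraph.
Variables (T : finType) (e : rel T) (S : {set T}).

Lemma connect_induced_sym : symmetric e -> connect_sym (induced e S).
Proof.
by move=> esym; apply: sym_connect_sym => a b; rewrite /induced esym [(b \in S) && _]andbC.
Qed.

Lemma connect_induced_mem a b : a \in S -> connect (induced e S) a b -> b \in S.
Proof. by move=> aS /(closed_connect _) <- // x y /and3P[_ -> ->]. Qed.

End InducedSubgraph.

Section Resolving.
Variables (T : finType) (e : rel T).
Local Notation d := (dist e).

Definition resolvingb (R : {set T}) :=
  [forall x, forall y, (x != y) ==> [exists r in R, d r x != d r y]].

Lemma resolvingP R : reflect (resolving e R) (resolvingb R).
Proof.
apply: (iffP forallP) => [resR x y | resR x]; last first.
  by apply/forallP => y; apply/implyP => /resR[r rR dxy]; apply/exists_inP; exists r.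
by move=> /(implyP (forallP (resR x) y)) /exists_inP[r]; exists r.
Qed.

Lemma resolving_injP R :
  resolving e R <-> (forall x y, {in R, forall r, d r x = d r y} -> x = y).
Proof.
split=> [resR x y sameR | injR x y].
  by apply/eqP/negPn/negP => /resR[r /sameR ->]; rewrite eqxx.
case: (boolP [exists r in R, d r x != d r y]) => [/exists_inP[r] | /exists_inPn same].
  by exists r.
by rewrite (injR x y) ?eqxx // => r /same /negPn /eqP.
Qed.

Lemma metric_basis_exists : connected_graph e -> exists B, metric_basis e B.
Proof.
move=> conn; have resT : resolvingb setT.
  apply/resolvingP => x y xy; exists x; rewrite ?inE // dist0 eq_sym.
  by apply: contra xy => /eqP /(dist_eq0 conn) ->.
case: (arg_minnP (fun B : {set T} => #|B|) resT) => B /resolvingP resB minB.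
by exists B; split=> // R /resolvingP; apply: minB.
Qed.

Lemma metric_basis_exchange B u w :
  metric_basis e B -> u \in B -> resolving e (w |: B :\ u) ->
  metric_basis e (w |: B :\ u).
Proof.
move=> [_ minB] uB resB'; split=> // R /minB; apply: leq_trans.
by rewrite cardsU1 [#|B|](cardsD1 u) uB leq_add2r leq_b1.
Qed.

End Resolving.

Section PendantVertex.
Variables (T : finType) (e : rel T) (u v : T).
Hypotheses (esym : symmetric e) (eirr : irreflexive e) (conn : connected_graph e).
Hypotheses (euv : e u v) (u_pendant : forall w, e u w -> w = v).

Local Notation d := (dist e).
Local Notation V' := (~: [set v; u]).
Local Notation comp := (connect (induced e V')).

Lemma pendant_neighbour_neq : v != u.
Proof. by apply: contraTneq euv => ->; rewrite eirr. Qed.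

Lemma dist_pendant x : x != u -> d u x = (d v x).+1.
Proof.
move=> xu; apply/eqP; rewrite eqn_leq.
rewrite -[in X in X && _]add1n -[in X in X && _](dist_edge conn eirr euv) dist_triangle //=.
move: (dist_walk conn u x); case: (d u x) => [/walk0_eq xu0 | n].
  by rewrite xu0 eqxx in xu.
by rewrite walkS => /existsP[z /andP[/u_pendant -> /dist_le]].
Qed.

Lemma dist_pendant_r x : x != u -> d x u = (d x v).+1.
Proof. by move=> xu; rewrite !(dist_sym conn esym x) dist_pendant. Qed.

Lemma comp_sym : connect_sym (induced e V').
Proof. exact: connect_induced_sym. Qed.

Lemma component_exit a x y : a \in V' -> comp a x -> ~~ comp a y -> e x y -> y = v.
Proof.
move=> aV ax ay xy; have xV := connect_induced_mem aV ax.
case: (boolP (y \in V')) => [yV | ].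
  have xy_V' : induced e V' x y by rewrite /induced xy xV yV.
  by rewrite (connect_trans ax (connect1 xy_V')) in ay.
rewrite !inE negbK => /orP[/eqP // | /eqP yu].
by move: xV; rewrite yu esym in xy; rewrite (u_pendant xy) !inE eqxx.
Qed.

Lemma dist_through_v a b : ~~ comp a b -> d a b = d a v + d v b.
Proof.
move=> ab; have dvu : d v u = 1 by rewrite (dist_sym conn esym) (dist_edge conn eirr euv).
case: (eqVneq a u) => [au | au].
  rewrite au dist_pendant -?dvu ?(dist_edge conn eirr euv) ?add1n //.
  by apply: contraNneq ab => ->; rewrite au.
case: (eqVneq b u) => [-> | bu]; first by rewrite dist_pendant_r // dvu addn1.
case: (eqVneq a v) => [-> | av]; first by rewrite dist0.
case: (eqVneq b v) => [-> | bv]; first by rewrite dist0 addn0.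
have aV : a \in V' by rewrite !inE negb_or av au.
apply/eqP; rewrite eqn_leq dist_triangle //=.
have /walkP[p <- /andP[ap /eqP pb]] := dist_walk conn a b.
rewrite -pb in ab *.
have [x [y [ax ay xy]]] := path_exit (C := comp a) ap (connect0 _ a) ab.
by rewrite (component_exit aV ax ay xy); apply: dist_path_mem.
Qed.

Lemma component_neighbour a : a \in V' -> exists2 x, comp a x & e x v.
Proof.
move=> aV; have [p ap av] := connectP (conn a v).
have vNcomp : last a p \notin comp a.
  by rewrite -av; apply/negP => /(connect_induced_mem aV); rewrite !inE eqxx.
have [x [y [ax ay xy _]]] := path_exit ap (connect0 _ a) vNcomp.
by exists x; rewrite // -(component_exit aV ax ay xy).
Qed.

Section Exchange.
Variable B : {set T}.
Hypotheses (resB : resolving e B) (two_comps : at_least_two_components e V').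

Local Notation S := (B :\ u).

Lemma eq_of_dist_S_u x z : {in S, forall r, d r x = d r z} -> d u x = d u z -> x = z.
Proof.
move=> sameS ux; have := (resolving_injP e B).1 resB; apply=> r rB.
by case: (eqVneq r u) => [-> // | ru]; apply: sameS; rewrite !inE ru.
Qed.

Lemma S_nonempty : exists r, r \in S.
Proof.
case: (set_0Vmem S) => [S0 | [r rS]]; last by exists r.
have [a [b [aV bV ab]]] := two_comps.
have [x ax xv] := component_neighbour aV; have [y by_ yv] := component_neighbour bV.
have [xu yu] : x != u /\ y != u.
  by split; [move: (connect_induced_mem aV ax) | move: (connect_induced_mem bV by_)];
    rewrite !inE negb_or => /andP[].
have xy : x = y.
  apply: eq_of_dist_S_u; first by rewrite S0 => r; rewrite inE.
  by rewrite !dist_pendant // !(dist_sym conn esym v) !(dist_edge conn eirr).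
by move: ab; rewrite (connect_trans ax) // comp_sym xy.
Qed.

Definition u_twin z := [&& z != u, d v z == 1 & [forall r in S, d r z == d r u]].

Lemma u_twin_unique z1 z2 : u_twin z1 -> u_twin z2 -> z1 = z2.
Proof.
move=> /and3P[z1u /eqP vz1 /eqfun_inP S_z1] /and3P[z2u /eqP vz2 /eqfun_inP S_z2].
apply: eq_of_dist_S_u => [r rS | ]; first by rewrite S_z1 ?S_z2.
by rewrite !dist_pendant // vz1 vz2.
Qed.

Section Replacement.
Variable w : T.
Hypotheses (wu : w != u) (only_twin : forall z, u_twin z -> z = w).
Hypothesis seen_via_v :
  forall t, t != u -> exists2 r, r \in w |: S & d r t = d r v + d v t.

Lemma landmark_neq_u r : r \in w |: S -> r != u.
Proof. by rewrite !inE => /orP[/eqP -> // | /andP[]]. Qed.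

Lemma eq_of_dist_neq_u x z : x != u -> z != u ->
  {in w |: S, forall r, d r x = d r z} -> x = z.
Proof.
move=> xu zu same; apply: eq_of_dist_S_u => [r rS | ].
  by apply: same; rewrite in_setU1 rS orbT.
have [rx rx_in via_x] := seen_via_v xu; have [rz rz_in via_z] := seen_via_v zu.
rewrite !dist_pendant //; apply/eqP; rewrite eqSS eqn_leq.
by rewrite (dist_via_le conn via_x (same _ rx_in)) (dist_via_le conn via_z) ?same.
Qed.

Lemma u_twin_of_dist z : z != u -> {in w |: S, forall r, d r u = d r z} -> u_twin z.
Proof.
move=> zu same; have [r r_in via_z] := seen_via_v zu.
have dvz : d v z = 1.
  apply/eqP; rewrite -(eqn_add2l (d r v)) -via_z -same // dist_pendant_r ?landmark_neq_u //.
  by rewrite addn1.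
rewrite /u_twin zu dvz eqxx; apply/eqfun_inP => r' r'S.
by rewrite same // in_setU1 r'S orbT.
Qed.

Lemma replacement_resolving : resolving e (w |: S).
Proof.
apply/resolving_injP => x z same.
have u_alone y : y != u -> {in w |: S, forall r, d r u = d r y} -> False.
  move=> yu same_y; move: (only_twin (u_twin_of_dist yu same_y)) => yw.
  by move: (same_y w (setU11 _ _)); rewrite yw dist0 => /(dist_eq0 conn) /eqP; apply/negP.
case: (eqVneq x u) => [xu | xu]; case: (eqVneq z u) => [zu | zu]; first by rewrite xu zu.
- by rewrite xu in same; case: (u_alone z zu same).
- by rewrite zu in same; case: (u_alone x xu) => r /same ->.
- exact: eq_of_dist_neq_u.
Qed.

End Replacement.

Lemma exchange_free_component c : c \in V' -> {in S, forall r, ~~ comp c r} ->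
  exists2 w, w != u & resolving e (w |: S).
Proof.
move=> cV free; have [w cw wv] := component_neighbour cV.
have wu : w != u by move: (connect_induced_mem cV cw); rewrite !inE negb_or => /andP[].
have free_w r : r \in S -> ~~ comp r w.
  by move=> /free; apply: contra => rw; rewrite (connect_trans cw) // comp_sym.
have dvw : d v w = 1 by rewrite (dist_sym conn esym) (dist_edge conn eirr wv).
have tw : u_twin w.
  rewrite /u_twin wu dvw eqxx; apply/eqfun_inP => r rS.
  rewrite (dist_through_v (free_w r rS)) dvw addn1 dist_pendant_r //.
  by move: rS; rewrite !inE => /andP[].
exists w => //; apply: (replacement_resolving wu) => [z /u_twin_unique/(_ tw) // | t tu].
case: (boolP (comp w t)) => wt; last by exists w; [exact: setU11 | exact: dist_through_v].
have [r rS] := S_nonempty; exists r; first by rewrite in_setU1 rS orbT.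
apply: dist_through_v; apply: contra (free_w r rS) => rt.
by rewrite comp_sym (connect_trans wt) // comp_sym.
Qed.

Lemma exchange_components_hit : (forall c, c \in V' -> exists2 r, r \in S & comp c r) ->
  exists2 w, w != u & resolving e (w |: S).
Proof.
move=> hit.
have via w t : exists2 r, r \in w |: S & d r t = d r v + d v t.
  have [a [b [aV bV ab]]] := two_comps.
  have [c cV ct] : exists2 c, c \in V' & ~~ comp c t.
    case: (boolP (comp a t)) => [a_t | ]; last by exists a.
    by exists b => //; apply: contra ab => b_t; rewrite (connect_trans a_t) // comp_sym.
  have [r rS cr] := hit c cV; exists r; first by rewrite in_setU1 rS orbT.
  by apply: dist_through_v; apply: contra ct; apply: connect_trans cr.
case: (pickP u_twin) => [y ty | no_twin].
  have yu : y != u by case/and3P: ty.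
  exists y => //; apply: replacement_resolving => [// | z /u_twin_unique/(_ ty) // | t _].
  exact: via.
exists v; first exact: pendant_neighbour_neq.
apply: replacement_resolving => [| z | t _]; last exact: via.
  exact: pendant_neighbour_neq.
by rewrite no_twin.
Qed.

Lemma pendant_exchange : exists2 w, w != u & resolving e (w |: S).
Proof.
case: (boolP [exists c in V', [forall r in S, ~~ comp c r]]).
  by move=> /exists_inP[c cV /forall_inP free]; apply: exchange_free_component cV free.
move=> /exists_inPn hit; apply: exchange_components_hit => c /hit /forall_inPn[r rS /negPn cr].
by exists r.
Qed.

End Exchange.

End PendantVertex.

Theorem theorem3 (T : finType) (e : rel T) (u v : T) :
  simple_graph e ->
  connected_graph e ->
  e u v -> (forall w, e u w -> w = v) ->
  cut_vertex e v ->
  at_least_two_components e (~: [set v; u]) ->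
  ~ basis_forced e u.
Proof.
move=> [esym eirr] conn euv u_pendant _ two_comps forced.
have [B basisB] := metric_basis_exists conn.
have uB := forced B basisB.
have [w wu resB'] := pendant_exchange esym eirr conn euv u_pendant basisB.1 two_comps.
have := forced _ (metric_basis_exchange basisB uB resB').
by rewrite in_setU1 in_setD1 eqxx andFb orbF eq_sym (negbTE wu).
Qed.
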